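(* Assume $f_1,f_0$ are $\ell_1$-Lipschitz with constants $L_1,L_0$. Define $$L_{UN}:=\sup_{\pi\in[0,1],\;0<\Delta\le\pi}\Big(\pi L_1+(1-\pi)L_0+|f_1(0,\pi-\Delta)-f_0(0,\pi-\Delta)|\Big).$$ If $L_{UN}<1$, then $f(\pi)=\pi f_1(0,\pi)+(1-\pi)f_0(0,\pi)$ satisfies $|f(x)-f(y)|\le L_{UN}|x-y|$ for all $x,y\in[0,1]$; consequently $f$ has a unique fixed point $\pi^{\mathfrak e}$, the unconstrained policy is equalizing in discrete time, and if $\max_{j\in\{A,B\}}|\pi_0(1|j)-\pi^{\mathfrak e}|\le d$ then $|\pi_t(1|A)-\pi_t(1|B)|\le 2dL_{UN}^t$ for all $t\ge0$.
   Context: Two groups $A,B$; at time $t$ group $j$ has qualification profile $\pi_t(1|j)\in[0,1]$, $\pi_t(0|j)=1-\pi_t(1|j)$. Selection rates $\beta_t(v;j)=\tau(v;j)\pi_t(v|j)$ for a policy $\tau(v;j)\in[0,1]$. Dynamics: continuously differentiable $f_0,f_1:[0,1]^2\to[0,1]$, and in discrete time $\pi_{t+1}(1|j)=\pi_t(1|j)f_1(\beta_t(0;j),\beta_t(1;j))+(1-\pi_t(1|j))f_0(\beta_t(0;j),\beta_t(1;j))$. Under the unconstrained policy ($\tau(1;j)=1$, $\tau(0;j)=0$) each group evolves by $\pi_{t+1}=f(\pi_t)$. ''$\ell_1$-Lipschitz with constant $L_i$'' means $|f_i(x_1,x_2)-f_i(y_1,y_2)|\le L_i(|x_1-y_1|+|x_2-y_2|)$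 for all $x_1,x_2,y_1,y_2\in[0,1]$. Equalizing: $|\pi_t(1|A)-\pi_t(1|B)|\to0$ for all initial profiles. *)

From Stdlib Require Import Reals.
Open Scope R_scope.

Definition in01 (x : R) : Prop := 0 <= x <= 1.

Definition maps_unit_square (g : R -> R -> R) : Prop :=
  forall x1 x2, in01 x1 -> in01 x2 -> in01 (g x1 x2).

Definition l1_lipschitz (g : R -> R -> R) (L : R) : Prop :=
  forall x1 x2 y1 y2, in01 x1 -> in01 x2 -> in01 y1 -> in01 y2 ->
    Rabs (g x1 x2 - g y1 y2) <= L * (Rabs (x1 - y1) + Rabs (x2 - y2)).

(* qualification profile pi(v|j): v = true stands for 1, false for 0 *)
Definition profile (p : R) (v : bool) : R := if v then p else 1 - p.

Definition beta (tau : bool -> R) (p : R) (v : bool) : R := tau v * profile p v.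

(* one discrete-time step of pi(1|j) under policy tau *)
Definition step (f0 f1 : R -> R -> R) (tau : bool -> R) (p : R) : R :=
  p * f1 (beta tau p false) (beta tau p true)
  + (1 - p) * f0 (beta tau p false) (beta tau p true).

Fixpoint traj (f0 f1 : R -> R -> R) (tau : bool -> R) (p0 : R) (t : nat) : R :=
  match t with
  | O => p0
  | S t' => step f0 f1 tau (traj f0 f1 tau p0 t')
  end.

Definition tauUN (v : bool) : R := if v then 1 else 0.

Definition fUN (f0 f1 : R -> R -> R) (p : R) : R :=
  p * f1 0 p + (1 - p) * f0 0 p.

Definition LUN_set (f0 f1 : R -> R -> R) (L0 L1 : R) (z : R) : Prop :=
  exists p D, in01 p /\ 0 < D /\ D <= p /\
    z = p * L1 + (1 - p) * L0 + Rabs (f1 0 (p - D) - f0 0 (p - D)).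

Definition equalizing (f0 f1 : R -> R -> R) (tauA tauB : bool -> R) : Prop :=
  forall pA pB, in01 pA -> in01 pB ->
    Un_cv (fun t => Rabs (traj f0 f1 tauA pA t - traj f0 f1 tauB pB t)) 0.

(* Writing f x - f y = x (f1(0,x) - f1(0,y)) + (1-x) (f0(0,x) - f0(0,y))
   + (x-y) (f1(0,y) - f0(0,y)) for y < x, the Lipschitz bounds and the choice
   p = x, D = x - y in the set defining L_UN show that f is an L_UN-contraction
   of [0,1].  The unconstrained policy makes each group evolve by f, so the
   distance between the two trajectories shrinks by L_UN at every step; the
   fixed point exists by the intermediate value theorem and is unique since
   L_UN < 1. *)
From Stdlib Require Import Reals Lra Psatz.
Open Scope R_scope.

Definition lipschitz_on01 (h : R -> R) (K : R) : Prop :=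
  forall x y, in01 x -> in01 y -> Rabs (h x - h y) <= K * Rabs (x - y).

Definition clamp01 (x : R) : R := Rmax 0 (Rmin x 1).

Lemma clamp01_in01 x : in01 (clamp01 x).
Proof.
  unfold clamp01, in01, Rmax, Rmin.
  destruct (Rle_dec x 1); destruct Rle_dec; lra.
Qed.

Lemma clamp01_id x : in01 x -> clamp01 x = x.
Proof.
  unfold clamp01, in01, Rmax, Rmin; intros.
  destruct (Rle_dec x 1); destruct Rle_dec; lra.
Qed.

Lemma clamp01_contract x y : Rabs (clamp01 x - clamp01 y) <= Rabs (x - y).
Proof.
  unfold clamp01, Rmax, Rmin. apply Rabs_le.
  destruct (Rle_dec x 1), (Rle_dec y 1); repeat destruct Rle_dec;
    unfold Rabs; destruct Rcase_abs; lra.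
Qed.

Lemma lipschitz_continuity (h : R -> R) (K : R) :
  0 <= K -> (forall x y, Rabs (h x - h y) <= K * Rabs (x - y)) -> continuity h.
Proof.
  intros K_ge0 h_lip x eps eps_gt0.
  exists (eps / (K + 1)); split; [apply Rdiv_lt_0_compat; lra|].
  intros y [_ close]; simpl in *; unfold R_dist in *.
  apply Rmult_lt_compat_r with (r := K + 1) in close; [|lra].
  unfold Rdiv in close; rewrite Rmult_assoc, Rinv_l in close by lra.
  pose proof (h_lip y x); pose proof (Rabs_pos (y - x)); nra.
Qed.

Section SelfMapOfUnitInterval.

Variables (h : R -> R) (K : R).
Hypothesis K_ge0 : 0 <= K.
Hypothesis h_in01 : forall x, in01 x -> in01 (h x).
Hypothesis h_lip : lipschitz_on01 h K.

Lemma lipschitz_on01_fixed_point : exists p, in01 p /\ h p = p.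
Proof.
  (* extend [x - h x] continuously to R through the retraction [clamp01] *)
  set (g := fun x => clamp01 x - h (clamp01 x)).
  assert (g_cont : continuity g).
  { apply (lipschitz_continuity g (1 + K)); [lra|]; intros x y; unfold g.
    pose proof (clamp01_contract x y).
    pose proof (h_lip _ _ (clamp01_in01 x) (clamp01_in01 y)).
    replace (_ - _ - _) with ((clamp01 x - clamp01 y)
      - (h (clamp01 x) - h (clamp01 y))) by ring.
    eapply Rle_trans; [apply Rabs_triang|]; rewrite Rabs_Ropp; nra. }
  assert (g_sign : g 0 * g 1 <= 0).
  { unfold g; rewrite !clamp01_id by (unfold in01; lra).
    assert (h0 := h_in01 0 ltac:(unfold in01; lra)).
    assert (h1 := h_in01 1 ltac:(unfold in01; lra)).
    unfold in01 in *; nra. }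
  destruct (IVT_cor g 0 1 g_cont ltac:(lra) g_sign) as [p [p_in01 g_p]].
  exists p; split; [exact p_in01|].
  unfold g in g_p; rewrite clamp01_id in g_p by exact p_in01; lra.
Qed.

Lemma lipschitz_on01_fixed_point_unique p q :
  K < 1 -> in01 p -> h p = p -> in01 q -> h q = q -> q = p.
Proof.
  intros K_lt1 p_in01 hp q_in01 hq.
  pose proof (h_lip q p q_in01 p_in01) as shrink; rewrite hp, hq in shrink.
  assert (Rabs (q - p) = 0) by (pose proof (Rabs_pos (q - p)); nra).
  apply Rminus_diag_uniq; destruct (Req_dec (q - p) 0) as [|nonzero];
    [assumption | exfalso; exact (Rabs_no_R0 _ nonzero ltac:(assumption))].
Qed.

Lemma iter_in01 t x : in01 x -> in01 (Nat.iter t h x).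
Proof. intros; induction t; simpl; auto. Qed.

Lemma iter_lipschitz_on01 t x y : in01 x -> in01 y ->
  Rabs (Nat.iter t h x - Nat.iter t h y) <= K ^ t * Rabs (x - y).
Proof.
  intros x_in01 y_in01; induction t as [|t IH]; simpl; [lra|].
  eapply Rle_trans; [apply h_lip; apply iter_in01; assumption|].
  rewrite Rmult_assoc; apply Rmult_le_compat_l; assumption.
Qed.

Lemma iter_dist_cv0 x y : K < 1 -> in01 x -> in01 y ->
  Un_cv (fun t => Rabs (Nat.iter t h x - Nat.iter t h y)) 0.
Proof.
  intros K_lt1 x_in01 y_in01 eps eps_gt0.
  destruct (pow_lt_1_zero K ltac:(rewrite Rabs_right; lra) eps eps_gt0)
    as [N small]; exists N; intros t t_ge; unfold R_dist.
  rewrite Rminus_0_r, Rabs_Rabsolu.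
  specialize (small t t_ge); rewrite Rabs_right in small by
    (apply Rle_ge, pow_le; lra).
  pose proof (iter_lipschitz_on01 t x y x_in01 y_in01).
  assert (Rabs (x - y) <= 1) by (apply Rabs_le; unfold in01 in *; lra).
  pose proof (pow_le K t K_ge0); nra.
Qed.

End SelfMapOfUnitInterval.

Lemma l1_lipschitz_ge0 g L : l1_lipschitz g L -> 0 <= L.
Proof.
  intros g_lip; specialize (g_lip 0 0 1 0).
  unfold in01 in g_lip; rewrite Rminus_0_r, Rabs_R0, Rplus_0_r in g_lip.
  rewrite (Rabs_left (0 - 1)) in g_lip by lra.
  pose proof (Rabs_pos (g 0 0 - g 1 0)).
  assert (bound := g_lip ltac:(lra) ltac:(lra) ltac:(lra) ltac:(lra)); lra.
Qed.

Section UnconstrainedDynamics.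

Variables (f0 f1 : R -> R -> R) (L0 L1 LUN : R).
Hypothesis f0_lip : l1_lipschitz f0 L0.
Hypothesis f1_lip : l1_lipschitz f1 L1.
Hypothesis LUN_lub : is_lub (LUN_set f0 f1 L0 L1) LUN.

Lemma fUN_in01 : maps_unit_square f0 -> maps_unit_square f1 ->
  forall p, in01 p -> in01 (fUN f0 f1 p).
Proof.
  intros f0_in01 f1_in01 p p_in01.
  assert (zero_in01 : in01 0) by (unfold in01; lra).
  pose proof (f0_in01 0 p zero_in01 p_in01).
  pose proof (f1_in01 0 p zero_in01 p_in01).
  unfold fUN, in01 in *; nra.
Qed.

Lemma traj_tauUN p t : traj f0 f1 tauUN p t = Nat.iter t (fUN f0 f1) p.
Proof.
  induction t as [|t IH]; simpl; [reflexivity|]; rewrite IH.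
  unfold step, fUN, beta, tauUN, profile; simpl.
  rewrite Rmult_0_l, Rmult_1_l; reflexivity.
Qed.

Lemma LUN_set_le x y : in01 x -> in01 y -> y < x ->
  x * L1 + (1 - x) * L0 + Rabs (f1 0 y - f0 0 y) <= LUN.
Proof.
  intros x_in01 y_in01 y_lt_x; apply (proj1 LUN_lub).
  exists x, (x - y); unfold in01 in *.
  replace (x - (x - y)) with y by ring; repeat split; lra.
Qed.

Lemma LUN_ge0 : 0 <= LUN.
Proof.
  pose proof (l1_lipschitz_ge0 _ _ f1_lip).
  pose proof (LUN_set_le 1 0 ltac:(unfold in01; lra) ltac:(unfold in01; lra)
    ltac:(lra)).
  pose proof (Rabs_pos (f1 0 0 - f0 0 0)); lra.
Qed.

Lemma fUN_lipschitz_lt x y : in01 x -> in01 y -> y < x ->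
  Rabs (fUN f0 f1 x - fUN f0 f1 y) <= LUN * (x - y).
Proof.
  intros x_in01 y_in01 y_lt_x.
  assert (zero_in01 : in01 0) by (unfold in01; lra).
  assert (f1_xy : Rabs (f1 0 x - f1 0 y) <= L1 * (x - y)).
  { pose proof (f1_lip 0 x 0 y zero_in01 x_in01 zero_in01 y_in01) as lip.
    rewrite Rminus_0_r, Rabs_R0, Rplus_0_l, (Rabs_right (x - y)) in lip
      by lra; exact lip. }
  assert (f0_xy : Rabs (f0 0 x - f0 0 y) <= L0 * (x - y)).
  { pose proof (f0_lip 0 x 0 y zero_in01 x_in01 zero_in01 y_in01) as lip.
    rewrite Rminus_0_r, Rabs_R0, Rplus_0_l, (Rabs_right (x - y)) in lip
      by lra; exact lip. }
  pose proof (LUN_set_le x y x_in01 y_in01 y_lt_x).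
  replace (fUN f0 f1 x - fUN f0 f1 y) with (x * (f1 0 x - f1 0 y)
    + (1 - x) * (f0 0 x - f0 0 y) + (x - y) * (f1 0 y - f0 0 y))
    by (unfold fUN; ring).
  unfold in01 in *.
  eapply Rle_trans; [apply Rabs_triang|].
  eapply Rle_trans; [apply Rplus_le_compat_r, Rabs_triang|].
  rewrite !Rabs_mult, (Rabs_right x), (Rabs_right (1 - x)),
    (Rabs_right (x - y)) by lra.
  nra.
Qed.

Lemma fUN_lipschitz : lipschitz_on01 (fUN f0 f1) LUN.
Proof.
  intros x y x_in01 y_in01.
  destruct (Rtotal_order x y) as [x_lt_y|[<-|y_lt_x]].
  - rewrite Rabs_minus_sym, (Rabs_minus_sym x y), (Rabs_right (y - x)) by lra.
    apply fUN_lipschitz_lt; assumption.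
  - rewrite !Rminus_diag, Rabs_R0; lra.
  - rewrite (Rabs_right (x - y)) by lra.
    apply fUN_lipschitz_lt; assumption.
Qed.

End UnconstrainedDynamics.

Theorem mainTheorem2 (f0 f1 : R -> R -> R) (L0 L1 LUN : R) :
  maps_unit_square f0 -> maps_unit_square f1 ->
  l1_lipschitz f1 L1 -> l1_lipschitz f0 L0 ->
  is_lub (LUN_set f0 f1 L0 L1) LUN ->
  LUN < 1 ->
  (forall x y, in01 x -> in01 y ->
     Rabs (fUN f0 f1 x - fUN f0 f1 y) <= LUN * Rabs (x - y)) /\
  exists pe : R,
    (in01 pe /\ fUN f0 f1 pe = pe /\
     (forall q, in01 q -> fUN f0 f1 q = q -> q = pe)) /\
    equalizing f0 f1 tauUN tauUN /\
    (forall (d pA pB : R), in01 pA -> in01 pB ->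
       Rmax (Rabs (pA - pe)) (Rabs (pB - pe)) <= d ->
       forall t : nat,
         Rabs (traj f0 f1 tauUN pA t - traj f0 f1 tauUN pB t) <= 2 * d * LUN ^ t).
Proof.
  intros f0_in01 f1_in01 f1_lip f0_lip LUN_lub LUN_lt1.
  pose proof (LUN_ge0 f0 f1 L0 L1 LUN f1_lip LUN_lub) as LUN_ge0.
  pose proof (fUN_lipschitz f0 f1 L0 L1 LUN f0_lip f1_lip LUN_lub) as f_lip.
  pose proof (fUN_in01 f0 f1 f0_in01 f1_in01) as f_in01.
  split; [exact f_lip|].
  destruct (lipschitz_on01_fixed_point _ _ LUN_ge0 f_in01 f_lip)
    as [pe [pe_in01 f_pe]].
  exists pe; split; [|split].
  - split; [exact pe_in01|]; split; [exact f_pe|]; intros q q_in01 f_q.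
    exact (lipschitz_on01_fixed_point_unique _ _ f_lip pe q
      LUN_lt1 pe_in01 f_pe q_in01 f_q).
  - intros pA pB pA_in01 pB_in01.
    apply Un_cv_ext with (fun t => Rabs (Nat.iter t (fUN f0 f1) pA
      - Nat.iter t (fUN f0 f1) pB)); [intros t; rewrite !traj_tauUN; reflexivity|].
    exact (iter_dist_cv0 _ _ LUN_ge0 f_in01 f_lip pA pB LUN_lt1 pA_in01 pB_in01).
  - intros d pA pB pA_in01 pB_in01 start_close t.
    rewrite !traj_tauUN.
    pose proof (iter_lipschitz_on01 _ _ LUN_ge0 f_in01 f_lip t pA pB
      pA_in01 pB_in01).
    assert (Rabs (pA - pB) <= 2 * d).
    { pose proof (Rmax_l (Rabs (pA - pe)) (Rabs (pB - pe))).
      pose proof (Rmax_r (Rabs (pA - pe)) (Rabs (pB - pe))).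
      replace (pA - pB) with ((pA - pe) - (pB - pe)) by ring.
      eapply Rle_trans; [apply Rabs_triang|]; rewrite Rabs_Ropp; lra. }
    pose proof (pow_le LUN t LUN_ge0); nra.
Qed.
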